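(* For every $n\ge 2$, the number of permutations in $\mathcal{S}_{n,1}^{1\prec n}(1324)$ equals the number of $1324$-avoiding vertical dominoes with $n-2$ points; more precisely, there is an explicit bijection between these two sets.
   Context: $\mathcal{S}_n(1324)$ denotes the set of permutations of $\{1,\dots,n\}$ (written in one-line notation) that avoid the pattern $1324$. For $a,k\ge1$, $\mathcal{S}_{n,k}^{a\prec n}(1324)$ is the set of $\sigma\in\mathcal{S}_n(1324)$ such that $\sigma^{-1}(n)-\sigma^{-1}(a)=k$ and $\sigma^{-1}(b)>\sigma^{-1}(n)$ for every $b\in\{1,\dots,a-1\}$. Thus $\mathcal{S}_{n,1}^{1\prec n}(1324)$ consists of the $1324$-avoiding permutations in which the entry $1$ is immediately followed by the entry $n$. A $1324$-avoiding vertical domino with $m$ points is a pair $(\pi,h)$ where $\pi$ is a permutation of $\{1,\dots,m\}$ avoiding $1324$ and $h\in\{0,1,\dots,m\}$ is a horizontal cut such that the subsequence of $\pi$ formed by the values $\le h$ (the bottom cell) is order-isomorphic to a $132$-avoiding permutation and the subsequence formed by the values $>h$ (the top cell) is order-isomorphic to a $213$-avoiding permutation; two dominoes are different if they differ in $\pi$ or in $h$. *)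

From mathcomp Require Import all_boot all_fingroup.
Set Implicit Arguments. Unset Strict Implicit. Unset Printing Implicit Defensive.

Definition order_iso (t p : seq nat) : bool :=
  (size t == size p) &&
  [forall i : 'I_(size p), forall j : 'I_(size p),
     (nth 0 t i < nth 0 t j) == (nth 0 p i < nth 0 p j)].

Definition contains (p s : seq nat) : bool :=
  [exists m : (size s).-tuple bool, order_iso (mask m s) p].

Definition avoids (p s : seq nat) : bool := ~~ contains p s.

(* One-line notation of a permutation of {1,...,n}: sigma : 'S_n acts on
   {0,...,n-1}, and we shift values by one. *)
Definition word n (s : 'S_n) : seq nat := [seq (s i).+1 | i <- enum 'I_n].

(* 0-based position of the value x in the one-line notation (sigma^{-1}(x)
   up to a common shift, which is irrelevant for differences/comparisons). *)
Definition pos n (s : 'S_n) (x : nat) : nat := index x (word s).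

Definition Snk (n k a : nat) : {set 'S_n} :=
  [set s : 'S_n | [&& avoids [:: 1; 3; 2; 4] (word s),
                      pos s n == pos s a + k &
                      all (fun b => pos s n < pos s b) (iota 1 a.-1)]].

Definition dominoes (m : nat) : {set 'S_m * 'I_m.+1} :=
  [set d : 'S_m * 'I_m.+1 |
     [&& avoids [:: 1; 3; 2; 4] (word d.1),
         avoids [:: 1; 3; 2] [seq v <- word d.1 | v <= d.2] &
         avoids [:: 2; 1; 3] [seq v <- word d.1 | d.2 < v]]].

From mathcomp Require Import all_boot all_fingroup zify.
Set Implicit Arguments. Unset Strict Implicit. Unset Printing Implicit Defensive.

(* Since 1324 is an involution, inverting sigma preserves avoidance and turns
   "1 immediately followed by n" into "the last value is the first value plus
   one", i.e. a word x w (x+1) in which no letter of w lies in [x, x+1].  An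
   occurrence of 1324 in such a word cannot use both end letters; one using
   the first letter x has its other three letters above x+1 and forms a 213,
   one using the last letter has the other three below x and forms a 132.
   So x w (x+1) avoids 1324 exactly when w avoids 1324, its small letters
   avoid 132 and its large letters avoid 213: standardising w and cutting at
   x-1 gives a domino, and every domino arises uniquely this way. *)

Lemma order_isoP t p :
  reflect (size t = size p /\ forall i j, i < size p -> j < size p ->
             (nth 0 t i < nth 0 t j) = (nth 0 p i < nth 0 p j))
          (order_iso t p).
Proof.
apply: (iffP andP) => [[/eqP size_tp /forallP iso] | [size_tp iso]].
  by split=> // i j lt_i lt_j; exact: (eqP (forallP (iso (Ordinal lt_i)) (Ordinal lt_j))).
by split; [apply/eqP | apply/forallP => i; apply/forallP => j; rewrite iso].
Qed.

Lemma containsP p s : reflect (exists2 u, subseq u s & order_iso u p) (contains p s).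
Proof.
apply: (iffP existsP) => [[m iso_m] | [u /subseqP [m size_m ->] iso_u]].
  by exists (mask m s); first exact: mask_subseq.
by exists (Tuple (introT eqP size_m)).
Qed.

Lemma contains_mono p s f : {mono f : u v / u < v} -> contains p (map f s) = contains p s.
Proof.
move=> f_mono; have iso_map t : order_iso (map f t) p = order_iso t p.
  apply/order_isoP/order_isoP => -[size_tp iso]; rewrite size_map in size_tp *;
    split=> // i j lt_i lt_j; by rewrite -iso // !(nth_map 0) ?size_tp // f_mono.
apply/containsP/containsP => [[u /subseqP [m size_m ->] iso_u] | [u sub_u iso_u]].
  by exists (mask m s); [exact: mask_subseq | rewrite -iso_map map_mask].
by exists (map f u); [exact: map_subseq | rewrite iso_map].
Qed.

Lemma contains1324P s :
  reflect (exists a b c d, subseq [:: a; b; c; d] s /\ [/\ a < c, c < b & b < d])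
          (contains [:: 1; 3; 2; 4] s).
Proof.
apply: (iffP (containsP _ _))
  => [[u sub_u /order_isoP [size_u iso]] | [a [b [c [d [sub ineq]]]]]].
  case: u sub_u size_u iso => [|a [|b [|c [|d [|? ?]]]]] //= sub _ iso.
  by exists a, b, c, d; rewrite (iso 0 2) // (iso 2 1) // (iso 1 3).
exists [:: a; b; c; d] => //; apply/order_isoP; split=> //; case: ineq => ac cb bd.
by move=> [|[|[|[|i]]]] [|[|[|[|j]]]] //= _ _; lia.
Qed.

Lemma contains132P s :
  reflect (exists a b c, subseq [:: a; b; c] s /\ a < c < b) (contains [:: 1; 3; 2] s).
Proof.
apply: (iffP (containsP _ _))
  => [[u sub_u /order_isoP [size_u iso]] | [a [b [c [sub /andP [ac cb]]]]]].
  case: u sub_u size_u iso => [|a [|b [|c [|? ?]]]] //= sub _ iso.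
  by exists a, b, c; rewrite (iso 0 2) // (iso 2 1).
exists [:: a; b; c] => //; apply/order_isoP; split=> //.
by move=> [|[|[|i]]] [|[|[|j]]] //= _ _; lia.
Qed.

Lemma contains213P s :
  reflect (exists a b c, subseq [:: a; b; c] s /\ b < a < c) (contains [:: 2; 1; 3] s).
Proof.
apply: (iffP (containsP _ _))
  => [[u sub_u /order_isoP [size_u iso]] | [a [b [c [sub /andP [ba ac]]]]]].
  case: u sub_u size_u iso => [|a [|b [|c [|? ?]]]] //= sub _ iso.
  by exists a, b, c; rewrite (iso 1 0) // (iso 0 2).
exists [:: a; b; c] => //; apply/order_isoP; split=> //.
by move=> [|[|[|i]]] [|[|[|j]]] //= _ _; lia.
Qed.

Lemma subseq_rcons2 (T : eqType) (t s : seq T) x y :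
  subseq (rcons t x) (rcons s y) = if x == y then subseq t s else subseq (rcons t x) s.
Proof.
by rewrite -subseq_rev !rev_rcons /=; case: eqP; rewrite ?subseq_rev // -rev_rcons subseq_rev.
Qed.

Lemma contains1324_frame x y w :
  x <= y -> all (fun v => (v < x) || (y < v)) w ->
  contains [:: 1; 3; 2; 4] (x :: rcons w y) =
  [|| contains [:: 1; 3; 2; 4] w, contains [:: 1; 3; 2] [seq v <- w | v < x]
    | contains [:: 2; 1; 3] [seq v <- w | y < v]].
Proof.
move=> le_xy /allP w_gap.
have gap t : subseq t w -> all (fun v => (v < x) || (y < v)) t.
  by move=> /mem_subseq sub_tw; apply/allP => u /sub_tw /w_gap.
apply/idP/or3P => [/contains1324P [a [b [c [d [sub [ac cb bd]]]]]] | ].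
  move: sub => /=; case: eqP => [ax | _].
    rewrite -[[:: b; c; d]]/(rcons [:: b; c] d) subseq_rcons2; case: eqP => [dy | _] sub.
      by have /and3P [_ gc _] := gap _ sub; exfalso; lia.
    have /and4P [gb gc gd _] := gap _ sub.
    apply: Or33; apply/contains213P; exists b, c, d; split; last lia.
    by rewrite subseq_filter sub andbT /=; apply/and4P; split; lia.
  rewrite -[[:: a; b; c; d]]/(rcons [:: a; b; c] d) subseq_rcons2; case: eqP => [dy | _] sub.
    have /and4P [ga gb gc _] := gap _ sub.
    apply: Or32; apply/contains132P; exists a, b, c; split; last lia.
    by rewrite subseq_filter sub andbT /=; apply/and4P; split; lia.
  by apply: Or31; apply/contains1324P; exists a, b, c, d.
case=> [/contains1324P [a [b [c [d [sub ineq]]]]]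
       | /contains132P [a [b [c [sub /andP [ac cb]]]]]
       | /contains213P [a [b [c [sub /andP [ba ac]]]]]]; apply/contains1324P.
- exists a, b, c, d; split=> //.
  by apply: (subseq_trans sub); apply: (subseq_trans (subseq_rcons w y)); exact: subseq_cons.
- move: sub; rewrite subseq_filter => /andP [/and4P [ax bx cx _] sub].
  exists a, b, c, y; split; last by split; lia.
  apply: subseq_trans (subseq_cons _ x).
  by rewrite -[[:: a; b; c; y]]/(rcons [:: a; b; c] y) subseq_rcons2 eqxx.
- move: sub; rewrite subseq_filter => /andP [/and4P [ya yb yc _] sub].
  exists x, a, b, c; split; last by split; lia.
  by rewrite /= eqxx; exact: (subseq_trans sub (subseq_rcons w y)).
Qed.

Lemma subseq_enum_ord n (u : seq 'I_n) :
  subseq u (enum 'I_n) = sorted (relpre val ltn) u.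
Proof.
have lt_trans : transitive (relpre (val : 'I_n -> nat) ltn) by move=> ? ? ?; apply: ltn_trans.
have sorted_enum : sorted (relpre val ltn) (enum 'I_n).
  by rewrite -sorted_map val_enum_ord iota_ltn_sorted.
apply/idP/idP => [sub_u | sorted_u]; first exact: subseq_sorted sub_u sorted_enum.
apply/(subseq_uniqP (enum_uniq _)); apply: (irr_sorted_eq lt_trans) => //.
- by move=> i; rewrite /= ltnn.
- exact: sorted_filter.
- by move=> i; rewrite mem_filter mem_enum andbT.
Qed.

Lemma contains1324_permP n (s : 'S_n) :
  reflect (exists i j k l : 'I_n,
             [/\ i < j, j < k & k < l] /\ [/\ s i < s k, s k < s j & s j < s l])
          (contains [:: 1; 3; 2; 4] (word s)).
Proof.
apply: (iffP (contains1324P _))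
  => [[a [b [c [d [sub [ac cb bd]]]]]] | [i [j [k [l [lt_pos lt_val]]]]]].
  move: sub => /subseqP [m _]; rewrite /word -map_mask.
  have := mask_subseq m (enum 'I_n); rewrite subseq_enum_ord.
  case: (mask m _) => [|i [|j [|k [|l [|? ?]]]]] //= /and4P [ij jk kl _] [ea eb ec ed].
  subst a b c d; by exists i, j, k, l; split; split=> //; lia.
exists (s i).+1, (s j).+1, (s k).+1, (s l).+1; split; last by case: lt_val.
have sub : subseq [:: i; j; k; l] (enum 'I_n).
  by rewrite subseq_enum_ord; case: lt_pos => /= -> -> ->.
exact: (map_subseq (fun i => (s i).+1) sub).
Qed.

Lemma avoids1324_invg n (s : 'S_n) :
  avoids [:: 1; 3; 2; 4] (word s^-1) = avoids [:: 1; 3; 2; 4] (word s).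
Proof.
have contains_inv (t : 'S_n) :
    contains [:: 1; 3; 2; 4] (word t) -> contains [:: 1; 3; 2; 4] (word t^-1).
  case/contains1324_permP => [i [j [k [l [[ij jk kl] [ik kj jl]]]]]].
  by apply/contains1324_permP; exists (t i), (t k), (t j), (t l); rewrite !permK.
by congr negb; apply/idP/idP => /contains_inv; rewrite ?invgK.
Qed.

Lemma index_word n (s : 'S_n) (v : 'I_n) : index v.+1 (word s) = (s^-1)%g v.
Proof.
have inj_succ : injective (fun i : 'I_n => (s i).+1) by move=> i j [/val_inj/perm_inj].
by rewrite /word -{1}(permKV s v) (index_map inj_succ) index_enum_ord.
Qed.

Lemma ltn_bump2 h : {mono bump h : i j / i < j}.
Proof. by move=> i j; rewrite !ltnNge leq_bump2. Qed.

Lemma word_lift_perm0 n (j : 'I_n.+1) (q : 'S_n) :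
  word (lift_perm ord0 j q) = j.+1 :: map (bump j.+1) (word q).
Proof.
rewrite /word enum_ordSl /= lift_perm_id -map_comp; congr (_ :: _).
by rewrite -map_comp; apply: eq_map => k /=; rewrite lift_perm_lift bumpS.
Qed.

Lemma word_lift_permN n (j : 'I_n.+1) (q : 'S_n) :
  word (lift_perm ord_max j q) = rcons (map (bump j.+1) (word q)) j.+1.
Proof.
rewrite /word enum_ordSr map_rcons lift_perm_id -map_comp; congr (rcons _ _).
rewrite -map_comp; apply: eq_map => k /=.
have -> : widen_ord (leqnSn _) k = lift ord_max k by apply: val_inj; rewrite [RHS]lift_max.
by rewrite lift_perm_lift bumpS.
Qed.

Lemma lift_perm_inj n (i j : 'I_n.+1) : injective (lift_perm i j).
Proof.
move=> q1 q2 eq_q; apply/permP => k; apply: (@lift_inj _ j).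
by rewrite -!(lift_perm_lift i) eq_q.
Qed.

Lemma lift_permP n (i : 'I_n.+1) (s : 'S_n.+1) : exists q, s = lift_perm i (s i) q.
Proof.
pose f k := odflt k (unlift (s i) (s (lift i k))).
have liftf k : lift (s i) (f k) = s (lift i k).
  rewrite /f; have := neq_lift i k.
  by rewrite -(can_eq (permK s)) => /unlift_some [? ? ->].
have f_inj : injective f.
  by move=> k1 k2 /(congr1 (lift (s i))); rewrite !liftf => /perm_inj /lift_inj.
exists (perm f_inj); apply/permP => k.
by case: (unliftP i k) => [k'|] ->; rewrite ?lift_perm_id // lift_perm_lift permE liftf.
Qed.

Definition frame m (d : 'S_m * 'I_m.+1) : 'S_m.+2 :=
  lift_perm ord_max (lift ord0 d.2) (lift_perm ord0 d.2 d.1).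

Lemma word_frame m (p : 'S_m) (h : 'I_m.+1) :
  word (frame (p, h)) = h.+1 :: rcons (map (bump h.+2 \o bump h.+1) (word p)) h.+2.
Proof.
by rewrite /frame word_lift_permN word_lift_perm0 lift0 /= map_comp {1}/bump ltnn.
Qed.

Lemma avoids1324_frame m (d : 'S_m * 'I_m.+1) :
  avoids [:: 1; 3; 2; 4] (word (frame d)) = (d \in dominoes m).
Proof.
case: d => p h; set g := bump h.+2 \o bump h.+1.
have gE v : g v = if v <= h then v else v.+2.
  by rewrite /g /= /bump; case: leqP => le_hv; case: leqP; lia.
have g_mono : {mono g : u v / u < v} by move=> u v; rewrite /= !ltn_bump2.
have g_low : [seq v <- map g (word p) | v < h.+1] = map g [seq v <- word p | v <= h].
  rewrite filter_map; congr map; apply: eq_filter => v /=; rewrite gE; case: (leqP v h); lia.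
have g_high : [seq v <- map g (word p) | h.+2 < v] = map g [seq v <- word p | h < v].
  rewrite filter_map; congr map; apply: eq_filter => v /=; rewrite gE; case: (leqP v h); lia.
rewrite inE word_frame -/g /avoids contains1324_frame //; last first.
  by apply/allP => _ /mapP [v _ ->]; rewrite gE; case: (leqP v h); lia.
by rewrite g_low g_high !contains_mono // !negb_or.
Qed.

Lemma frame_inj m : injective (@frame m).
Proof.
move=> [p1 h1] [p2 h2] eq_frame.
have eq_h : h1 = h2.
  apply: (@lift_inj _ ord0).
  by have := congr1 (fun s : 'S_m.+2 => s ord_max) eq_frame; rewrite !lift_perm_id.
by move: eq_frame; rewrite /frame eq_h => /lift_perm_inj/lift_perm_inj /= ->.
Qed.

Definition framed m : {set 'S_m.+2} :=
  [set s | avoids [:: 1; 3; 2; 4] (word s) & val (s ord_max) == (s ord0).+1].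

Lemma framed_frame m : framed m = @frame m @: dominoes m.
Proof.
apply/setP => s; apply/idP/imsetP => [| [[p h] dom_ph ->]]; last first.
  rewrite inE avoids1324_frame dom_ph /frame lift_perm_id /=.
  have -> : ord0 = lift ord_max (ord0 : 'I_m.+1) by apply: val_inj.
  by rewrite lift_perm_lift lift_perm_id /= /bump ltnn.
rewrite inE => /andP [avoid_s /eqP s_max].
case: (unliftP ord0 (s ord_max)) => [h eq_h|]; last by move/(congr1 val); rewrite s_max.
have [q eq_s] := lift_permP ord_max s; have [p eq_q] := lift_permP ord0 q.
have s0 : s ord0 = lift (s ord_max) (q ord0).
  by rewrite {1}eq_s -(lift_perm_lift ord_max); congr (_ _); apply: val_inj.
have q0 : q ord0 = h.
  apply: val_inj; move: s_max; rewrite s0 eq_h /= /bump.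
  case: leqP; lia.
have frame_ph : frame (p, h) = s by rewrite /frame /= -eq_h -q0 -eq_q -eq_s.
by exists (p, h) => //; rewrite -avoids1324_frame frame_ph.
Qed.

Unset Implicit Arguments.

Theorem proposition2p1 (n : nat) (hn : 2 <= n) :
  #|Snk n 1 1| = #|dominoes (n - 2)|.
Proof.
case: n hn => [|[|m]] // _; rewrite subn2 /=.
have -> : Snk m.+2 1 1 = (fun s => s^-1)%g @^-1: framed m.
  apply/setP => s; rewrite !inE avoids1324_invg andbT /pos.
  by rewrite (index_word s ord_max) (index_word s ord0) addn1.
rewrite card_preimset; last exact: invg_inj.
by rewrite framed_frame card_imset //; exact: frame_inj.
Qed.
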